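(* Let $(S,* )$ be a finite cycle set of size $n$ and class $d$, with structure group $G$, germ $\overline G$, permutation group $\mathcal G$ and diagonal map $T$. Then: (i) the map $\psi\colon G\to\mathcal G$ factorizes through the projection $\pi\colon G\to\overline G$, i.e. there is a map $\phi\colon\overline G\to\mathcal G$ with $\psi=\phi\circ\pi$; (ii) $o(T)$ divides $d$, $d$ divides $|\mathcal G|$, and $|\mathcal G|$ divides $d^n$, where $o(T)$ is the order of the permutation $T$ of $S$.
   Context: A cycle set is a set $S$ with a binary operation $*$ such that each $t\mapsto s*t$ is bijective and $(s*t)*(s*u)=(t*s)*(t*u)$ for all $s,t,u$. Write $S=\{s_1,\dots,s_n\}$, let $\psi(s)\in\mathfrak S_n$ satisfy $s_i*s_j=s_{\psi(s_i)(j)}$, and $T(s)=s*s$ (a bijection of $S$ for finite cycle sets). The structure group $G$ has presentation $\langle S\mid s(s*t)=t(t*s),\ s\ne t\rangle$; $\psi$ extends to the anti-homomorphism $\psi\colon G\to\mathfrak S_n$ with $\psi(gh)=\psi(h)\circ\psi(g)$, whose image is the permutation group $\mathcal G=\langle\psi(s_1),\dots,\psi(s_n)\rangle$. With $\psi_k(s)=\psi(T^{k-1}(s))\circ\cdots\circ\psi(s)$, the class $d$ is the least $d\ge1$ with $\psi_d(s)=\mathrm{id}$ for all $s$. With $P_\sigma$ the matrix having $1$ at $(i,\sigma(i))$ and $\zeta_d=e^{2i\pi/d}$, the germ $\overline G$ is the subgroup of $GL_n(\mathbb C)$ generated by $\bar s_i=\mathrm{diag}(1,\dots,\zeta_d,\dots,1)P_{\psi(s_i)}$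 ($\zeta_d$ in position $i$), and $\pi\colon G\to\overline G$ is the surjective homomorphism $s_i\mapsto\bar s_i$. *)

From HB Require Import structures.
From mathcomp Require Import all_boot all_order all_algebra all_fingroup all_field.
Set Implicit Arguments. Unset Strict Implicit. Unset Printing Implicit Defensive.
Import GRing.Theory Num.Theory.
Local Open Scope ring_scope.
Local Open Scope group_scope.

(* A cycle set on S = 'I_n is encoded by psi : 'I_n -> {perm 'I_n}, with
   s_i * s_j = s_(psi s_i j).  Bijectivity of t |-> s * t is built in. *)
Definition cs_op (n : nat) (psi : 'I_n -> {perm 'I_n}) (s t : 'I_n) : 'I_n :=
  psi s t.

Definition is_cycle_set (n : nat) (psi : 'I_n -> {perm 'I_n}) : Prop :=
  forall s t u : 'I_n,
    cs_op psi (cs_op psi s t) (cs_op psi s u) = cs_op psi (cs_op psi t s) (cs_op psi t u).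

Definition diagT (n : nat) (psi : 'I_n -> {perm 'I_n}) (s : 'I_n) : 'I_n :=
  cs_op psi s s.

(* psi_k(s) = psi(T^{k-1} s) o ... o psi(s).  In mathcomp, (p * q) x = q (p x),
   i.e. p * q is "q after p", so this is the product psi(s) * psi(T s) * ... *)
Definition psik (n : nat) (psi : 'I_n -> {perm 'I_n}) (k : nat) (s : 'I_n)
  : {perm 'I_n} :=
  \prod_(i < k) psi (iter i (diagT psi) s).

Definition is_class (n : nat) (psi : 'I_n -> {perm 'I_n}) (d : nat) : Prop :=
  (0 < d)%N /\ (forall s, psik psi d s = 1) /\
  (forall d', (0 < d')%N -> (d' < d)%N -> exists s, psik psi d' s != 1).

Definition permGroup (n : nat) (psi : 'I_n -> {perm 'I_n}) : {group {perm 'I_n}} :=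
  <<[set psi s | s : 'I_n]>>%G.

(* Elements of the structure group G are represented by words in the
   generators s_i and their inverses: (i, true) = s_i, (i, false) = s_i^-1. *)
Definition word (n : nat) := seq ('I_n * bool).

(* psi : G -> calG (anti-homomorphism for composition, i.e. a homomorphism
   for mathcomp's left-to-right product). *)
Definition psiW (n : nat) (psi : 'I_n -> {perm 'I_n}) (w : word n) : {perm 'I_n} :=
  foldr (fun x acc => (if x.2 then psi x.1 else (psi x.1)^-1) * acc) 1 w.

Definition Pmx (n : nat) (sigma : {perm 'I_n}) : 'M[algC]_n :=
  \matrix_(i, j) (if j == sigma i then 1 else 0)%R.

Definition germGen (n : nat) (psi : 'I_n -> {perm 'I_n}) (z : algC) (i : 'I_n)
  : 'M[algC]_n :=
  (diag_mx (\row_(j < n) (if j == i then z else 1%R)) *m Pmx (psi i))%R.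

Definition piW (n : nat) (psi : 'I_n -> {perm 'I_n}) (z : algC) (w : word n)
  : 'M[algC]_n :=
  foldr (fun x acc =>
           ((if x.2 then germGen psi z x.1 else invmx (germGen psi z x.1)) *m acc)%R)
        (1%:M)%R w.

From HB Require Import structures.
From mathcomp Require Import all_boot all_order all_algebra all_fingroup all_field.
From mathcomp Require Import all_solvable.
Import GRing.Theory Num.Theory.
Set Implicit Arguments. Unset Strict Implicit. Unset Printing Implicit Defensive.

(* (i): every generator of the germ is a monomial matrix whose pattern of
   nonzero entries is the permutation psi(s_i); patterns multiply under
   products and invert under inverses, so reading off the pattern is phi.

   (ii): record a positive word w by nu(w) in N^n, where
   nu(s_j w)(i) = [i = j] + nu(w)(psi(s_j) i) (the 1-cocycle of the structure
   monoid).  A diamond argument on the cycle set relation shows that psi(w)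
   depends only on nu(w), and since psi_d(s) = id it does not change when d is
   added to one coordinate.  So psi induces a surjection F : (Z/d)^n -> calG,
   multiplicative for the twisted law a.b = a + b o F(a).  The fibres of F are
   translates of the additive subgroup K = F^-1(1), hence |calG| is the order of
   (Z/d)^n / K, which divides d^n; the exponent of this quotient is the least e
   with psi_e = id, that is d.  Finally T^d(s) = psi_d(s)(s) = s. *)

Section MonomialMatrices.
Variables (R : fieldType) (n : nat).
Local Open Scope ring_scope.

Definition monomial_of (M : 'M[R]_n) (s : {perm 'I_n}) :=
  forall i j, (M i j != 0) = (j == s i).

Lemma natr_bool_neq0 (b : bool) : ((b : nat)%:R != 0 :> R) = b.
Proof. by case: b; rewrite ?oner_eq0 ?eqxx. Qed.

Lemma monomial_of_eq0 M s i j : monomial_of M s -> j != s i -> M i j = 0.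
Proof. by move=> Ms; rewrite -Ms negbK => /eqP. Qed.

Lemma monomial_of1 : monomial_of 1%:M 1%g.
Proof. by move=> i j; rewrite mxE perm1 natr_bool_neq0 eq_sym. Qed.

Lemma monomial_ofM A B s t :
  monomial_of A s -> monomial_of B t -> monomial_of (A *m B) (s * t)%g.
Proof.
move=> As Bt i k; rewrite mxE (bigD1 (s i)) //= big1 ?addr0; last first.
  by move=> j /(monomial_of_eq0 As) ->; rewrite mul0r.
by rewrite mulf_eq0 negb_or As eqxx Bt permM.
Qed.

Lemma monomial_ofV A s :
  monomial_of A s -> A \in unitmx -> monomial_of (invmx A) s^-1%g.
Proof.
move=> As uA i j.
have Asj : A j (s j) != 0 by rewrite As.
have := congr1 (fun M : 'M[R]_n => M i (s j)) (mulVmx uA).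
rewrite /= !mxE (bigD1 j) //= big1 ?addr0 => [Eij|j' nj]; last first.
  by rewrite (monomial_of_eq0 As) ?mulr0 // (inj_eq perm_inj) eq_sym.
rewrite -(mulIr_eq0 _ (mulIf Asj)) Eij natr_bool_neq0.
by rewrite -[RHS](inj_eq (@perm_inj _ s)) permKV eq_sym.
Qed.

Definition monomial_perm (M : 'M[R]_n) : {perm 'I_n} :=
  odflt 1%g [pick s : {perm 'I_n} | [forall i, M i (s i) != 0]].

Lemma monomial_permE M s : monomial_of M s -> monomial_perm M = s.
Proof.
move=> Ms; rewrite /monomial_perm; case: pickP => [t /forallP Mt | /(_ s)] /=.
  by apply/permP => i; move: (Mt i); rewrite Ms => /eqP.
by apply: contraFeq => _; apply/forallP => i; rewrite Ms.
Qed.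

End MonomialMatrices.

Lemma Pmx_perm_mx n (s : {perm 'I_n}) : Pmx s = perm_mx s.
Proof. by apply/matrixP => i j; rewrite !mxE eq_sym; case: (_ == _). Qed.

Section Germ.
Variables (n : nat) (psi : 'I_n -> {perm 'I_n}) (z : algC).
Hypothesis z_neq0 : z != 0%R.
Local Open Scope ring_scope.

Lemma diag_germGen_neq0 (i k : 'I_n) : (if k == i then z else 1) != 0.
Proof. by case: ifP; rewrite ?oner_eq0. Qed.

Lemma germGen_monomial i : monomial_of (germGen psi z i) (psi i).
Proof.
move=> k j; rewrite /germGen mul_diag_mx !mxE mulf_eq0 negb_or diag_germGen_neq0 /=.
by case: (j == _); rewrite ?oner_eq0 ?eqxx.
Qed.

Lemma germGen_unit i : germGen psi z i \in unitmx.
Proof.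
rewrite unitmxE unitfE /germGen Pmx_perm_mx det_mulmx det_diag det_perm.
rewrite mulf_neq0 ?signr_eq0 //.
by apply/prodf_neq0 => k _; rewrite mxE diag_germGen_neq0.
Qed.

Lemma piW_monomial w : monomial_of (piW psi z w) (psiW psi w).
Proof.
elim: w => [|[i []] w IHw] /=; first exact: monomial_of1.
  exact: monomial_ofM (germGen_monomial i) IHw.
apply: monomial_ofM IHw.
exact: monomial_ofV (germGen_monomial i) (germGen_unit i).
Qed.

End Germ.

Lemma sum_nat_perm (T : finType) (c : T -> nat) (p : {perm T}) :
  (\sum_i c (p i) = \sum_i c i)%N.
Proof. by rewrite [RHS](reindex_inj (@perm_inj _ p)). Qed.

Lemma sum_nat_indicator (T : finType) (s : T) : (\sum_i (i == s) = 1)%N.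
Proof. by rewrite (bigD1 s) //= eqxx big1 // => i /negbTE->. Qed.

Section CycleSetWords.
Variables (n : nat) (psi : 'I_n -> {perm 'I_n}).
Local Open Scope group_scope.
Local Notation vec := {ffun 'I_n -> nat}.

Definition vec_cons (j : 'I_n) (c : vec) : vec :=
  [ffun i => (i == j) + c (psi j i)]%N.

Definition vec_behead (j : 'I_n) (c : vec) : vec :=
  [ffun i => c ((psi j)^-1 i) - ((psi j)^-1 i == j)]%N.

Definition word_vec (w : seq 'I_n) : vec :=
  foldr vec_cons [ffun => 0%N] w.

Definition word_perm (w : seq 'I_n) : {perm 'I_n} :=
  foldr (fun j p => psi j * p) 1 w.

Lemma word_vec_cons j w : word_vec (j :: w) = vec_cons j (word_vec w).
Proof. by []. Qed.

Lemma word_perm_cons j w : word_perm (j :: w) = psi j * word_perm w.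
Proof. by []. Qed.

Lemma vec_consE j (c : vec) i : vec_cons j c i = ((i == j) + c (psi j i))%N.
Proof. by rewrite ffunE. Qed.

Lemma vec_consI j : injective (vec_cons j).
Proof.
move=> c c' /ffunP E; apply/ffunP => i.
by have := E ((psi j)^-1 i); rewrite !vec_consE permKV => /addnI.
Qed.

Lemma vec_consK j (c : vec) : (0 < c j)%N -> vec_cons j (vec_behead j c) = c.
Proof.
move=> c_j; apply/ffunP => i; rewrite vec_consE ffunE permK.
by case: eqP => [->|_]; rewrite ?subn0 // add1n subn1 prednK.
Qed.

Lemma sum_vec_cons j (c : vec) : (\sum_i vec_cons j c i = (\sum_i c i).+1)%N.
Proof.
under eq_bigr do rewrite vec_consE.
by rewrite big_split /= sum_nat_indicator sum_nat_perm.
Qed.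

Lemma word_vec_cat w r i :
  word_vec (w ++ r) i = (word_vec w i + word_vec r (word_perm w i))%N.
Proof.
elim: w i => [|j w IHw] i /=; first by rewrite ffunE perm1.
by rewrite !vec_consE IHw permM addnA.
Qed.

Lemma word_perm_cat w r : word_perm (w ++ r) = word_perm w * word_perm r.
Proof. by elim: w => [|j w IHw] /=; rewrite ?mul1g // IHw mulgA. Qed.

Lemma sum_word_vec w : (\sum_i word_vec w i)%N = size w.
Proof.
elim: w => [|j w IHw]; first by apply: big1 => i _; rewrite ffunE.
by rewrite word_vec_cons sum_vec_cons IHw.
Qed.

Lemma word_vec_surj (c : vec) : exists w, word_vec w = c.
Proof.
have [k] := ubnP (\sum_i c i)%N; elim: k c => // k IHk c.
have [j c_j | c0] := pickP (fun j => 0 < c j)%N; last first.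
  exists [::]; apply/ffunP => i; rewrite ffunE; apply/esym/eqP.
  by rewrite -leqn0 leqNgt c0.
rewrite -(vec_consK c_j) sum_vec_cons ltnS => /IHk[w Ew].
by exists (j :: w); rewrite word_vec_cons Ew.
Qed.

Lemma word_vec_surj_cons (c : vec) j :
  (0 < c j)%N -> exists w, word_vec (j :: w) = c.
Proof.
move=> c_j; have [w Ew] := word_vec_surj (vec_behead j c).
by exists w; rewrite word_vec_cons Ew vec_consK.
Qed.

Lemma word_perm_in w : word_perm w \in permGroup psi.
Proof.
elim: w => [|j w IHw]; first exact: group1.
by rewrite word_perm_cons groupM // mem_gen // imset_f.
Qed.

Hypothesis psi_cycle : is_cycle_set psi.

Lemma psi_cycleM x y : psi x * psi (psi x y) = psi y * psi (psi y x).
Proof. by apply/permP => u; rewrite !permM; apply: psi_cycle. Qed.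

Lemma word_vec_swap x y r :
  word_vec [:: x, psi x y & r] = word_vec [:: y, psi y x & r].
Proof.
apply/ffunP => i; rewrite !word_vec_cons !vec_consE !(inj_eq perm_inj).
by rewrite -!permM psi_cycleM addnCA.
Qed.

Lemma word_perm_swap x y r :
  word_perm [:: x, psi x y & r] = word_perm [:: y, psi y x & r].
Proof. by rewrite !word_perm_cons !mulgA psi_cycleM. Qed.

(* Diamond lemma: words starting with distinct letters x and y are rewritten to
   start with the two sides [x, x * y] and [y, y * x] of a defining relation. *)
Lemma word_perm_congr w w' :
  word_vec w = word_vec w' -> word_perm w = word_perm w'.
Proof.
have [k] := ubnP (size w); elim: k w w' => // k IHk w w' lt_w_k E.
have size_E : size w = size w' by rewrite -!sum_word_vec E.
case: w w' lt_w_k E size_E => [|x u] [|y u'] // lt_u_k E [size_u].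
rewrite !word_perm_cons; rewrite !word_vec_cons in E.
have [eq_xy|neq_xy] := eqVneq x y.
  by subst y; rewrite (IHk u u') // (vec_consI E).
have [r Er] : exists r, word_vec (psi x y :: r) = word_vec u.
  apply: word_vec_surj_cons; move/ffunP/(_ y): E.
  by rewrite !vec_consE eqxx eq_sym (negbTE neq_xy) add0n => ->.
have Er' : word_vec (psi y x :: r) = word_vec u'.
  apply: (@vec_consI y); rewrite -E -Er -!word_vec_cons.
  by rewrite word_vec_swap.
have Eu : word_perm u = word_perm (psi x y :: r) by apply: IHk; rewrite ?Er.
have Eu' : word_perm u' = word_perm (psi y x :: r).
  by apply: IHk; rewrite ?Er' // -size_u.
by rewrite Eu Eu' -!word_perm_cons word_perm_swap.
Qed.

Lemma word_vec_surj_eq (c : vec) : exists w, word_vec w == c.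
Proof. by have [w <-] := word_vec_surj c; exists w. Qed.

Definition vec_perm (c : vec) : {perm 'I_n} :=
  word_perm (xchoose (word_vec_surj_eq c)).

Lemma vec_perm_word w : vec_perm (word_vec w) = word_perm w.
Proof. by apply: word_perm_congr; apply/eqP; exact: (xchooseP (word_vec_surj_eq _)). Qed.

End CycleSetWords.

Section DiagonalOrbits.
Variables (n : nat) (psi : 'I_n -> {perm 'I_n}).
Local Open Scope group_scope.

Lemma psikS k s : psik psi k.+1 s = psi s * psik psi k (diagT psi s).
Proof.
rewrite /psik big_ord_recl; congr (_ * _).
by apply: eq_bigr => i _; rewrite iterSr.
Qed.

Lemma psik_diagT k s : psik psi k s s = iter k (diagT psi) s.
Proof.
elim: k s => [|k IHk] s; first by rewrite /psik big_ord0 perm1.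
by rewrite psikS permM IHk iterSr.
Qed.

Lemma word_vec_traject k s :
  word_vec psi (traject (diagT psi) s k) = [ffun i => k * (i == s)]%N.
Proof.
elim: k s => [|k IHk] s; apply/ffunP => i; first by rewrite !ffunE.
by rewrite word_vec_cons vec_consE IHk !ffunE (inj_eq perm_inj) mulSn.
Qed.

Lemma word_perm_traject k s :
  word_perm psi (traject (diagT psi) s k) = psik psi k s.
Proof.
elim: k s => [|k IHk] s; first by rewrite /psik big_ord0.
by rewrite psikS -IHk.
Qed.

End DiagonalOrbits.

Section PeriodicCycleSet.
Variables (n : nat) (psi : 'I_n -> {perm 'I_n}) (k : nat).
Hypothesis psi_cycle : is_cycle_set psi.
(* The period is written k.+1 so that 'I_m carries its Z/mZ group structure. *)
Local Notation m := k.+1.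
Hypothesis psik_period : forall s, psik psi m s = 1%g.
Local Open Scope group_scope.
Local Notation vec := {ffun 'I_n -> nat}.

Lemma vec_perm_add_period (c : vec) s :
  vec_perm psi [ffun i => c i + m * (i == s)]%N = vec_perm psi c.
Proof.
have [r <-] := word_vec_surj psi c.
have -> : [ffun i => word_vec psi r i + m * (i == s)]%N =
          word_vec psi (traject (diagT psi) s m ++ r).
  apply/ffunP => i; rewrite word_vec_cat word_vec_traject word_perm_traject.
  by rewrite psik_period perm1 !ffunE addnC.
by rewrite !(vec_perm_word psi_cycle) word_perm_cat word_perm_traject psik_period mul1g.
Qed.

Lemma vec_perm_mod (c : vec) :
  vec_perm psi [ffun i => c i %% m]%N = vec_perm psi c.
Proof.
have [N] := ubnP (\sum_i c i)%N; elim: N c => // N IHN c lt_c_N.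
have [s le_m_cs | small] := pickP (fun s => m <= c s)%N; last first.
  by congr vec_perm; apply/ffunP => i; rewrite ffunE modn_small // ltnNge small.
pose c' := [ffun i => c i - m * (i == s)]%N.
have Ec : c = [ffun i => c' i + m * (i == s)]%N.
  apply/ffunP => i; rewrite !ffunE.
  by case: eqP => [->|_] /=; rewrite ?muln1 ?muln0 ?subn0 ?addn0 ?subnK.
have Ec_mod : [ffun i => c i %% m]%N = [ffun i => c' i %% m]%N.
  by apply/ffunP => i; rewrite Ec !ffunE addnC mulnC modnMDl.
rewrite Ec_mod [in RHS]Ec vec_perm_add_period IHN //.
move: lt_c_N; rewrite {1}Ec.
under eq_bigr do rewrite ffunE.
rewrite big_split /= -big_distrr /= sum_nat_indicator muln1 ltnS.
by apply: leq_trans; rewrite addnS ltnS leq_addr.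
Qed.

Local Notation V := 'rV['I_m]_n.

Definition natv (a : V) : vec := [ffun i => val (a ord0 i)].
Definition modv (c : vec) : V := \row_i inZp (c i).

Lemma natv_modv c : natv (modv c) = [ffun i => c i %% m]%N.
Proof. by apply/ffunP => i; rewrite !ffunE mxE. Qed.

Lemma modv_natv : cancel natv modv.
Proof.
by move=> a; apply/rowP => i; apply: val_inj; rewrite mxE ffunE /= modn_small.
Qed.

Lemma modv_expg c j : modv c ^+ j = modv [ffun i => j * c i]%N.
Proof.
elim: j => [|j IHj]; apply/rowP => i; apply: val_inj; rewrite !mxE ffunE //.
by rewrite expgS IHj -[(_ * _)%g]/(_ + _)%R !mxE /= ffunE modnDm mulSn.
Qed.

Definition vperm (a : V) : {perm 'I_n} := vec_perm psi (natv a).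

Lemma vperm_modv c : vperm (modv c) = vec_perm psi c.
Proof. by rewrite /vperm natv_modv vec_perm_mod. Qed.

Lemma vperm_word w : vperm (modv (word_vec psi w)) = word_perm psi w.
Proof. by rewrite vperm_modv vec_perm_word. Qed.

Lemma vperm1 : vperm 1%g = 1.
Proof.
rewrite /vperm (_ : natv 1%g = word_vec psi [::]) ?vec_perm_word //.
by apply/ffunP => i; rewrite !ffunE mxE.
Qed.

Lemma vperm_in a : vperm a \in permGroup psi.
Proof.
have [w Ew] := word_vec_surj psi (natv a).
by rewrite /vperm -Ew vec_perm_word // word_perm_in.
Qed.

Definition twisted_add (a b : V) : V :=
  modv [ffun i => natv a i + natv b (vperm a i)]%N.

Lemma vperm_twisted_add a b : vperm (twisted_add a b) = vperm a * vperm b.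
Proof.
have [w Ew] := word_vec_surj psi (natv a).
have [r Er] := word_vec_surj psi (natv b).
have Ewr : [ffun i => natv a i + natv b (vperm a i)]%N = word_vec psi (w ++ r).
  by apply/ffunP => i; rewrite ffunE word_vec_cat /vperm -Ew -Er vec_perm_word.
by rewrite /twisted_add Ewr vperm_word word_perm_cat /vperm -Ew -Er !vec_perm_word.
Qed.

Lemma twisted_add_inj a : injective (twisted_add a).
Proof.
move=> b b' /rowP E; rewrite -[b]modv_natv -[b']modv_natv; congr modv.
apply/ffunP => i; have /(congr1 val) := E ((vperm a)^-1 i).
by rewrite !mxE !ffunE permKV /= => /eqP; rewrite eqn_modDl !modn_small // => /eqP.
Qed.

Lemma vperm_image : vperm @: [set: V] = permGroup psi.
Proof.
apply/eqP; rewrite eqEsubset; apply/andP; split.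
  by apply/subsetP => _ /imsetP[a _ ->]; exact: vperm_in.
have image_group : group_set (vperm @: [set: V]).
  apply/group_setP; split.
    by rewrite -vperm1 imset_f ?inE.
  move=> _ _ /imsetP[a _ ->] /imsetP[b _ ->].
  by rewrite -vperm_twisted_add imset_f ?inE.
rewrite -[vperm @: _]/(gval (Group image_group)) gen_subG.
apply/subsetP => _ /imsetP[s _ ->]; apply/imsetP.
by exists (modv (word_vec psi [:: s])); rewrite ?inE // vperm_word /= mulg1.
Qed.

Definition vperm_ker : {set V} := [set a | vperm a == 1].

Lemma twisted_add_ker a b : vperm a = 1 -> twisted_add a b = (a + b)%R.
Proof. by move=> a1; apply/rowP => i; apply: val_inj; rewrite !mxE !ffunE a1 perm1. Qed.

Lemma vperm_ker_group_set : group_set vperm_ker.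
Proof.
apply/group_setP; split.
  by rewrite inE vperm1.
move=> a b; rewrite !inE => /eqP a1 /eqP b1.
by rewrite -[a * b]/(a + b)%R -twisted_add_ker // vperm_twisted_add a1 b1 mulg1.
Qed.
Canonical vperm_ker_group := Group vperm_ker_group_set.

Lemma vperm_fiber a : [set b | vperm b == vperm a] = twisted_add a @: vperm_ker.
Proof.
apply/setP => b; rewrite inE; apply/eqP/imsetP => [Eb | [c]]; last first.
  by rewrite inE => /eqP c1 ->; rewrite vperm_twisted_add c1 mulg1.
have [add_a' add_aK add_a'K] := injF_bij (@twisted_add_inj a).
exists (add_a' b); last by rewrite add_a'K.
by rewrite inE -(inj_eq (mulgI (vperm a))) -vperm_twisted_add add_a'K Eb mulg1.
Qed.

Lemma card_rV_permGroup_ker : #|[set: V]| = (#|permGroup psi| * #|vperm_ker|)%N.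
Proof.
rewrite -sum1_card (partition_big vperm (mem (permGroup psi))); last first.
  by move=> a _; exact: vperm_in.
rewrite -sum_nat_const; apply: eq_bigr => g; rewrite -vperm_image => /imsetP[a _ ->].
rewrite -(card_imset _ (@twisted_add_inj a)) -vperm_fiber -sum1_card.
by apply: eq_bigl => b; rewrite !inE.
Qed.

Lemma rV_norm_vperm_ker : [set: V] \subset 'N(vperm_ker).
Proof. exact: sub_abelian_norm (FinRing.zmod_abelian _) (subsetT _). Qed.

Lemma card_permGroup_quotient : #|permGroup psi| = #|[set: V] / vperm_ker|.
Proof.
rewrite card_quotient ?rV_norm_vperm_ker //; apply/eqP.
rewrite -(eqn_pmul2l (cardG_gt0 vperm_ker_group)) Lagrange ?subsetT //.
by rewrite card_rV_permGroup_ker mulnC.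
Qed.

Lemma card_permGroup_dvd_exp : (#|permGroup psi| %| m ^ n)%N.
Proof.
have card_V : #|[set: V]| = (m ^ n)%N by rewrite cardsT card_mx card_ord mul1n.
by rewrite -card_V card_rV_permGroup_ker dvdn_mulr.
Qed.

Lemma exponent_quotient_ker_dvd : (exponent ([set: V] / vperm_ker) %| m)%N.
Proof.
apply: dvdn_trans (exponent_quotient [set: V]%G vperm_ker_group) _.
apply/exponentP => a _; rewrite -[a]modv_natv modv_expg.
by apply/rowP => i; apply: val_inj; rewrite !mxE ffunE /= modnMr.
Qed.

Lemma psik_exponent_quotient_ker s :
  psik psi (exponent ([set: V] / vperm_ker)) s = 1.
Proof.
set L := exponent _; pose e := modv [ffun i => (i == s) : nat].
have e_norm : e \in 'N(vperm_ker) by rewrite (subsetP rV_norm_vperm_ker) ?inE.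
have : e ^+ L \in vperm_ker.
  apply: coset_idr; first exact: groupX.
  by rewrite morphX // expg_exponent // mem_quotient ?inE.
have -> : e ^+ L = modv (word_vec psi (traject (diagT psi) s L)).
  by rewrite modv_expg word_vec_traject; congr modv; apply/ffunP => i; rewrite !ffunE.
by rewrite inE vperm_word word_perm_traject => /eqP.
Qed.

Lemma period_dvd_card_permGroup :
  (forall j, (0 < j < m)%N -> exists s, psik psi j s != 1) ->
  (m %| #|permGroup psi|)%N.
Proof.
move=> psik_min; set L := exponent ([set: V] / vperm_ker).
have L_gt0 : (0 < L)%N := exponent_gt0 _.
suff <- : L = m by rewrite card_permGroup_quotient exponent_dvdn.
apply/eqP; rewrite eqn_leq dvdn_leq ?exponent_quotient_ker_dvd // leqNgt.
apply/negP => lt_L_m; have [|s /eqP[]] := psik_min L; first by rewrite L_gt0.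
exact: psik_exponent_quotient_ker.
Qed.

End PeriodicCycleSet.

Lemma diagT_perm_order_dvd n (psi : 'I_n -> {perm 'I_n}) d :
  (0 < d)%N -> (forall s, psik psi d s = 1%g) ->
  exists T : {perm 'I_n}, (forall s, T s = diagT psi s) /\ (#[T]%g %| d)%N.
Proof.
move=> d_gt0 psik_d.
have iter_d s : iter d (diagT psi) s = s by rewrite -psik_diagT psik_d perm1.
have T_inj : injective (diagT psi).
  by apply: (can_inj (g := iter d.-1 (diagT psi))) => s; rewrite -iterSr prednK ?iter_d.
exists (perm T_inj); split => [s|]; first by rewrite permE.
rewrite order_dvdn; apply/eqP/permP => s; rewrite permX perm1 -[RHS]iter_d.
by apply: eq_iter => t; rewrite permE.
Qed.

Theorem mainTheorem5 (n : nat) (psi : 'I_n -> {perm 'I_n}) (d : nat)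
  (z : algC) :
  is_cycle_set psi -> is_class psi d -> (d.-primitive_root z)%R ->
  (* (i) psi factors through pi *)
  (exists phi : 'M[algC]_n -> {perm 'I_n},
      forall w : word n, phi (piW psi z w) = psiW psi w) /\
  (* (ii) *)
  (exists Tp : {perm 'I_n},
      (forall s, Tp s = diagT psi s) /\ (#[Tp]%g %| d)%N) /\
  (d %| #|permGroup psi|)%N /\ (#|permGroup psi| %| d ^ n)%N.
Proof.
move=> psi_cycle [d_gt0 [psik_d psik_min]] z_prim.
have z_neq0 : z != 0%R by rewrite (prim_root_eq0 z_prim) -lt0n.
split; first by exists (@monomial_perm _ n) => w; exact/monomial_permE/piW_monomial.
split; first exact: diagT_perm_order_dvd.
case: d d_gt0 psik_d psik_min {z_prim} => // k _ psik_period psik_min.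
split; last exact: card_permGroup_dvd_exp.
by apply: period_dvd_card_permGroup => // j /andP[]; exact: psik_min.
Qed.
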